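(* Let $Y=\bigcap_{n\in\omega}U_n$, where each $U_n$ is an open $\pi$-dense subset of the Baire space $\mathcal N=(\omega^\omega,\tau_{\mathcal N})$. Then there is a Baire foliage tree on $Y$ (with the subspace topology from $\mathcal N$) that shoots into the standard foliage tree $\mathbf S$.
   Context: A tree is a pair $(Q,<)$ with $<$ irreflexive transitive such that every set of predecessors $\{v:v<x\}$ is well-ordered; $\mathrm{sons}(x)$ = set of immediate successors of $x$; a branch is an inclusion-maximal chain. A foliage tree is $\mathbf F=(\mathcal T,l)$ with $\mathcal T$ a tree (skeleton) and $\mathbf F_x=l(x)$ the leaf at node $x$. The standard foliage tree $\mathbf S$ has skeleton $(\omega^{<\omega},\subsetneq)$ and leaves $\mathbf S_x=\{p\in\omega^\omega:x\subseteq p\}$. $A\subseteq\omega^\omega$ is $\pi$-dense in the Baire space iff for every $y\in\omega^{<\omega}$ infinitely many $n$ satisfy $\mathbf S_{y^\frown\langle n\rangle}\subseteq A$. $\mathrm{fruit}_{\mathbf F}(A)=\bigcap_{x\in A}\mathbf F_x$; $\mathrm{flesh}\,\mathbf F=\bigcup_x\mathbf F_x$; $\mathrm{shoot}_{\mathbf F}(z)=\{\bigcup_{s\in C}\mathbf F_s: C$ cofinite subset of $\mathrm{sons}(z)\}$; $\mathrm{scope}_{\mathbf F}(p)=\{y:p\in\mathbf F_y\}$; for families $\gamma,\delta$, $\gamma\gg\delta$ means every nonempty $D\in\delta$ contains some nonempty $G\in\gamma$. A Baire foliage tree on a space $X$ is a foliage tree whose skeleton is isomorphic to $(\omega^{<\omega},\subsetneq)$,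 all of whose leaves are open in $X$, which is locally strict (for every non-maximal node $x$, $\mathbf F_x$ is the union of the pairwise disjoint family $(\mathbf F_s)_{s\in\mathrm{sons}(x)}$), has strict branches (it has a node and $\mathrm{fruit}_{\mathbf F}(B)$ is a singleton for every branch $B$), and whose leaf at its least node equals $X$. A foliage tree $\mathbf H$ shoots into a foliage tree $\mathbf F$ iff for every $p\in\mathrm{flesh}\,\mathbf H$ and every $y\in\mathrm{scope}_{\mathbf F}(p)$ there is $x\in\mathrm{scope}_{\mathbf H}(p)$ with $\mathrm{shoot}_{\mathbf H}(x)\gg\mathrm{shoot}_{\mathbf F}(y)$. *)

From Stdlib Require Import List Arith.
Import ListNotations.

Definition point := nat -> nat.
Definition pset := point -> Prop.
Definition family := pset -> Prop.

Definition subset (A B : pset) : Prop := forall p, A p -> B p.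
Definition set_eq (A B : pset) : Prop := forall p, A p <-> B p.
Definition nonempty (A : pset) : Prop := exists p, A p.

Definition baire_open (U : pset) : Prop :=
  forall p, U p -> exists n, forall q, (forall i, i < n -> q i = p i) -> U q.

Definition open_in (X A : pset) : Prop :=
  exists U, baire_open U /\ set_eq A (fun p => U p /\ X p).

(* omega^{<omega} = list nat; strict inclusion of finite sequences = strict prefix. *)
Definition strict_prefix (x y : list nat) : Prop :=
  exists l, l <> [] /\ y = x ++ l.

Definition std_leaf (x : list nat) : pset :=
  fun p => forall i, i < length x -> p i = nth i x 0.

Definition pi_dense (A : pset) : Prop :=
  forall y : list nat, forall m, exists n, m <= n /\ subset (std_leaf (y ++ [n])) A.

Record foliage_tree := FT {
  node : Type;
  lt : node -> node -> Prop;
  leaf : node -> pset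
}.

Definition is_tree (F : foliage_tree) : Prop :=
  (forall x, ~ lt F x x) /\
  (forall x y z, lt F x y -> lt F y z -> lt F x z) /\
  (* every set of predecessors is well-ordered (lt is transitive irreflexive,
     so: linearly ordered and every nonempty subset has a least element) *)
  (forall x, (forall u v, lt F u x -> lt F v x -> u = v \/ lt F u v \/ lt F v u) /\
             (forall A : node F -> Prop, (forall u, A u -> lt F u x) -> (exists u, A u) ->
                exists m, A m /\ forall u, A u -> u = m \/ lt F m u)).

Definition sons (F : foliage_tree) (x : node F) : node F -> Prop :=
  fun s => lt F x s /\ ~ exists z, lt F x z /\ lt F z s.

Definition chain (F : foliage_tree) (B : node F -> Prop) : Prop :=
  forall u v, B u -> B v -> u = v \/ lt F u v \/ lt F v u.

Definition branch (F : foliage_tree) (B : node F -> Prop) : Prop :=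
  chain F B /\ forall C, chain F C -> (forall u, B u -> C u) -> forall u, C u -> B u.

Definition fruit (F : foliage_tree) (A : node F -> Prop) : pset :=
  fun p => forall x, A x -> leaf F x p.

Definition flesh (F : foliage_tree) : pset := fun p => exists x, leaf F x p.

Definition scope (F : foliage_tree) (p : point) : node F -> Prop :=
  fun y => leaf F y p.

Definition finite_set {T : Type} (A : T -> Prop) : Prop :=
  exists l : list T, forall t, A t -> In t l.

Definition shoot (F : foliage_tree) (z : node F) : family :=
  fun G => exists C : node F -> Prop,
    (forall s, C s -> sons F z s) /\
    finite_set (fun s => sons F z s /\ ~ C s) /\
    set_eq G (fun p => exists s, C s /\ leaf F s p).

Definition refines (gamma delta : family) : Prop :=
  forall D, delta D -> nonempty D -> exists G, gamma G /\ nonempty G /\ subset G D.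

Definition shoots_into (H F : foliage_tree) : Prop :=
  forall p, flesh H p -> forall y, scope F p y ->
    exists x, scope H p x /\ refines (shoot H x) (shoot F y).

Definition locally_strict (F : foliage_tree) : Prop :=
  forall x, (exists y, lt F x y) ->
    set_eq (leaf F x) (fun p => exists s, sons F x s /\ leaf F s p) /\
    (forall s t, sons F x s -> sons F x t -> s <> t ->
       forall p, leaf F s p -> leaf F t p -> False).

Definition strict_branches (F : foliage_tree) : Prop :=
  inhabited (node F) /\
  forall B, branch F B -> exists p, forall q, fruit F B q <-> q = p.

Definition skeleton_iso_baire (F : foliage_tree) : Prop :=
  exists f : node F -> list nat,
    (forall a b, f a = f b -> a = b) /\ (forall y, exists a, f a = y) /\
    (forall a b, lt F a b <-> strict_prefix (f a) (f b)).

Definition baire_foliage_tree (X : pset) (F : foliage_tree) : Prop :=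
  skeleton_iso_baire F /\
  (forall x, open_in X (leaf F x)) /\
  locally_strict F /\
  strict_branches F /\
  exists r, (forall x, x = r \/ lt F r x) /\ set_eq (leaf F r) X.

Definition standard_tree : foliage_tree :=
  FT (list nat) strict_prefix std_leaf.

(* The tree is the pullback of the standard tree along an address map from Y
   onto the Baire space, computed by an automaton that reads a point p of Y.
   Its state holds a standard node [stem] extended by p, the index [level] of
   the next open set U_k that p has to enter, and a phase.  In phase [Guess] the
   automaton emits a deadline d without reading anything; in phase [Wait] it
   copies coordinates of p until p enters U_k, which must happen before the
   deadline; the coordinate after the entry is emitted as the second half of a
   Cantor pair whose first half was already committed to by d.  Because every
   run meets every deadline, each address is realised by exactly one point of Y
   (strict branches); each digit depends on finitely many coordinates (open
   leaves); and outside phase [Guess] the sons of a node map finite-to-one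
   into the sons of its stem (shooting). *)

From Stdlib Require Import List Arith Lia Classical ClassicalEpsilon
  FunctionalExtensionality Cantor Wf_nat.
Import ListNotations.

(** * Initial segments of points *)

Definition init (p : point) (n : nat) : list nat := map p (seq 0 n).

Lemma length_init p n : length (init p n) = n.
Proof. unfold init. now rewrite length_map, length_seq. Qed.

Lemma nth_init p n i : i < n -> nth i (init p n) 0 = p i.
Proof.
  intros Hi. unfold init.
  rewrite nth_indep with (d' := p 0) by (rewrite length_map, length_seq; lia).
  now rewrite map_nth, seq_nth.
Qed.

Lemma init_S p n : init p (S n) = init p n ++ [p n].
Proof. unfold init. now rewrite seq_S, map_app. Qed.

Lemma init_ext p q n : (forall i, i < n -> q i = p i) -> init q n = init p n.
Proof.
  intros H. apply nth_ext with 0 0; rewrite !length_init; [easy|].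
  intros i Hi. rewrite !nth_init by lia. auto.
Qed.

Lemma init_nth x : init (fun i => nth i x 0) (length x) = x.
Proof.
  apply nth_ext with 0 0; rewrite length_init; [easy|].
  intros i Hi. now rewrite nth_init.
Qed.

Lemma std_leaf_init w p : std_leaf w p <-> init p (length w) = w.
Proof.
  split.
  - intros H. apply nth_ext with 0 0; rewrite length_init; [easy|].
    intros i Hi. rewrite nth_init by lia. auto.
  - intros <- i Hi. rewrite length_init in Hi. now rewrite nth_init.
Qed.

Lemma std_leaf_unique w y p :
  std_leaf w p -> std_leaf y p -> length w = length y -> w = y.
Proof. rewrite !std_leaf_init. congruence. Qed.

Lemma std_leaf_app w l p : std_leaf (w ++ l) p -> std_leaf w p.
Proof.
  intros H i Hi. rewrite <- (app_nth1 w l 0 Hi). apply H.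
  rewrite length_app. lia.
Qed.

Lemma std_leaf_snoc w c p :
  std_leaf (w ++ [c]) p <-> std_leaf w p /\ p (length w) = c.
Proof.
  split.
  - intros H. split; [now apply std_leaf_app in H|].
    rewrite H by (rewrite last_length; lia). apply nth_middle.
  - intros [Hw Hc] i Hi. rewrite last_length in Hi.
    destruct (Nat.lt_ge_cases i (length w)).
    + rewrite app_nth1 by easy. auto.
    + replace i with (length w) by lia. now rewrite nth_middle.
Qed.

Definition prefix (u v : list nat) : Prop := exists l, v = u ++ l.

Definition agree (u v : list nat) : Prop :=
  forall i, i < length u -> i < length v -> nth i u 0 = nth i v 0.

Lemma agree_sym u v : agree u v -> agree v u.
Proof. intros H i Hv Hu. symmetry. auto. Qed.

Lemma agree_eq u v : agree u v -> length u = length v -> u = v.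
Proof. intros H E. apply nth_ext with 0 0; auto. intros. apply H; lia. Qed.

Lemma prefix_iff u v : prefix u v <-> length u <= length v /\ agree u v.
Proof.
  split.
  - intros [l ->]. rewrite length_app. split; [lia|].
    intros i Hi _. now rewrite app_nth1.
  - intros [Hle Hag]. exists (skipn (length u) v).
    rewrite <- (firstn_skipn (length u) v) at 1. f_equal.
    apply agree_eq; [|rewrite length_firstn; lia].
    intros i Hi _. rewrite length_firstn in Hi. rewrite nth_firstn.
    destruct (Nat.ltb_spec i (length u)); [|lia]. symmetry. apply Hag; lia.
Qed.

Lemma prefix_refl u : prefix u u.
Proof. exists []. now rewrite app_nil_r. Qed.

Lemma prefix_trans u v w : prefix u v -> prefix v w -> prefix u w.
Proof. intros [l1 ->] [l2 ->]. exists (l1 ++ l2). now rewrite app_assoc. Qed.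

Lemma strict_prefix_iff u v : strict_prefix u v <-> prefix u v /\ u <> v.
Proof.
  split.
  - intros [l [Hl ->]]. split; [now exists l|].
    intros E. apply Hl, (app_inv_head u). now rewrite app_nil_r.
  - intros [[l ->] Hn]. exists l. split; [|easy].
    intros ->. apply Hn. now rewrite app_nil_r.
Qed.

Lemma comparable_iff_agree u v :
  u = v \/ strict_prefix u v \/ strict_prefix v u <-> agree u v.
Proof.
  rewrite !strict_prefix_iff, !prefix_iff. split.
  - intros [->|[[[_ H] _]|[[_ H] _]]]; auto using agree_sym. now intros i.
  - intros H. destruct (list_eq_dec Nat.eq_dec u v) as [|Hn]; [now left|right].
    destruct (Nat.le_ge_cases (length u) (length v)).
    + left. auto.
    + right. auto using agree_sym.
Qed.

(** * Trees on finite sequences *)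

Definition prefix_tree (L : list nat -> pset) : foliage_tree :=
  FT (list nat) strict_prefix L.

Lemma sons_prefix_tree L x s : sons (prefix_tree L) x s <-> exists r, s = x ++ [r].
Proof.
  unfold sons; simpl. split.
  - intros [[l [Hl ->]] Hmin]. destruct l as [|r l]; [easy|]. exists r.
    destruct l as [|r' l]; [easy|]. exfalso. apply Hmin. exists (x ++ [r]). split.
    + exists [r]. split; easy.
    + exists (r' :: l). split; [easy|]. now rewrite <- app_assoc.
  - intros [r ->]. split; [exists [r]; split; easy|].
    intros [z [[l1 [H1 ->]] [l2 [H2 E]]]]. rewrite <- app_assoc in E.
    apply app_inv_head in E. destruct l1 as [|? [|]], l2; easy.
Qed.

Lemma locally_strict_prefix_tree (L : list nat -> pset) :
  (forall x p, L x p <-> exists r, L (x ++ [r]) p) ->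
  (forall x r r' p, L (x ++ [r]) p -> L (x ++ [r']) p -> r = r') ->
  locally_strict (prefix_tree L).
Proof.
  intros Hcover Hdisj x _. split.
  - intros p. rewrite Hcover. split.
    + intros [r Hr]. exists (x ++ [r]). rewrite sons_prefix_tree. eauto.
    + intros [s [Hs Hp]]. apply sons_prefix_tree in Hs as [r ->]. eauto.
  - intros s t Hs Ht Hst p Hps Hpt.
    apply sons_prefix_tree in Hs as [r ->], Ht as [r' ->].
    apply Hst. f_equal. f_equal. eauto.
Qed.

Lemma branch_prefix_tree L B :
  branch (prefix_tree L) B -> exists f, forall x, B x <-> x = init f (length x).
Proof.
  intros [Hchain Hmax].
  assert (Hagree : forall u v, B u -> B v -> agree u v).
  { intros u v Hu Hv. apply comparable_iff_agree, Hchain; auto. }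
  assert (Hin : forall z, (forall u, B u -> agree u z) -> B z).
  { intros z Hz. apply (Hmax (fun u => B u \/ u = z)); auto.
    intros u v [Hu| ->] [Hv| ->]; try (now apply Hchain);
      apply comparable_iff_agree; auto using agree_sym. now intros i. }
  assert (Hfirstn : forall u k, B u -> B (firstn k u)).
  { intros u k Hu. apply Hin. intros w Hw i Hi Hik.
    rewrite length_firstn in Hik. rewrite nth_firstn.
    destruct (Nat.ltb_spec i k); [|lia]. apply Hagree; auto; lia. }
  assert (Hlen : forall n, exists x, B x /\ length x = n).
  { induction n as [|n [x [Hx Hxn]]].
    - exists []. split; [|easy]. apply Hin. intros u _ i _ Hi. easy.
    - destruct (classic (exists u, B u /\ n < length u)) as [[u [Hu Hn]]|Hshort].
      + exists (firstn (S n) u). split; auto. rewrite length_firstn. lia.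
      + exists (x ++ [0]). rewrite length_app. split; [|simpl; lia].
        apply Hin. intros u Hu i Hi _.
        assert (length u <= n) by (apply Nat.nlt_ge; eauto).
        rewrite app_nth1 by lia. apply Hagree; auto; lia. }
  destruct (choice (fun n x => B x /\ length x = n) Hlen) as [b Hb].
  exists (fun i => nth i (b (S i)) 0). intros x. split.
  - intros Hx. apply nth_ext with 0 0; [now rewrite length_init|].
    intros i Hi. rewrite nth_init by easy.
    destruct (Hb (S i)). apply Hagree; auto; lia.
  - intros Ex. destruct (Hb (length x)) as [Hbx Hlx].
    enough (b (length x) = x) by congruence.
    apply agree_eq; [|easy]. intros i Hi _. rewrite Hlx in Hi.
    replace (nth i x 0) with (nth i (b (S i)) 0) by (rewrite Ex at 1; now rewrite nth_init).
    destruct (Hb (S i)). apply Hagree; auto; lia.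
Qed.

Lemma refines_shoot_prefix_tree (L L' : list nat -> pset) x y (c : nat -> nat) :
  (forall r, r <= c r) ->
  (forall r, nonempty (L (x ++ [r]))) ->
  (forall r, subset (L (x ++ [r])) (L' (y ++ [c r]))) ->
  refines (shoot (prefix_tree L) x) (shoot (prefix_tree L') y).
Proof.
  intros Hc Hne Hsub D [C' [_ [[excluded Hexcl] HD]]] _.
  set (bound := list_max (map (fun t => nth (length y) t 0) excluded)).
  set (C := fun s => exists r, s = x ++ [r] /\ bound < c r).
  exists (fun q => exists s, C s /\ L s q). split; [|split].
  - exists C. split; [|split].
    + intros s [r [-> _]]. apply sons_prefix_tree. eauto.
    + exists (map (fun r => x ++ [r]) (seq 0 (S bound))). intros s [Hs Hn].
      apply sons_prefix_tree in Hs as [r ->]. apply in_map_iff. exists r.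
      split; [easy|]. apply in_seq. enough (c r <= bound) by (specialize (Hc r); lia).
      apply Nat.nlt_ge. intros Hr. apply Hn. now exists r.
    + now intros q.
  - destruct (Hne (S bound)) as [q Hq]. exists q, (x ++ [S bound]).
    split; [|easy]. exists (S bound). split; [easy|]. specialize (Hc (S bound)). lia.
  - intros q [s [[r [-> Hr]] Hq]]. apply HD. exists (y ++ [c r]).
    split; [|now apply Hsub].
    apply NNPP. intros Hout.
    assert (Hex : In (y ++ [c r]) excluded).
    { apply Hexcl. split; [|easy]. apply sons_prefix_tree. eauto. }
    assert (c r <= bound); [|lia].
    pose proof (proj1 (list_max_le _ bound) (le_n _)) as Hbound.
    rewrite Forall_forall in Hbound. rewrite <- (nth_middle y [] (c r) 0).
    apply Hbound, in_map_iff. eauto.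
Qed.

(** * Least elements and enumerations *)

Lemma discrete_ivt (L : nat -> nat) a M :
  L 0 <= a -> a < L M -> (forall n, L (S n) <= S (L n)) ->
  exists n, L n = a /\ L (S n) = S a.
Proof.
  intros H0 HM HS. induction M as [|M IH]; [lia|].
  destruct (Nat.lt_ge_cases a (L M)); auto.
  exists M. specialize (HS M). lia.
Qed.

Definition least (P : nat -> Prop) (n : nat) : Prop := P n /\ forall m, P m -> n <= m.

Lemma least_unique P n n' : least P n -> least P n' -> n = n'.
Proof. intros [Hn Hmin] [Hn' Hmin']. apply Nat.le_antisymm; auto. Qed.

Lemma least_exists P : (exists n, P n) -> exists n, least P n.
Proof.
  intros H. destruct (dec_inh_nat_subset_has_unique_least_element P) as [n [Hn _]];
    eauto using classic.
Qed.

Definition least_from (A : nat -> Prop) (m : nat) : nat :=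
  epsilon (inhabits 0) (least (fun n => m <= n /\ A n)).

Lemma least_from_spec A m :
  (exists n, m <= n /\ A n) -> least (fun n => m <= n /\ A n) (least_from A m).
Proof. intros H. unfold least_from. apply epsilon_spec, least_exists, H. Qed.

Lemma least_from_eq A m n : least (fun n => m <= n /\ A n) n -> least_from A m = n.
Proof. intros H. apply (least_unique _ _ _ (least_from_spec A m (ex_intro _ n (proj1 H))) H). Qed.

Section Enumeration.
Variable A : nat -> Prop.
Hypothesis A_unbounded : forall m, exists n, m <= n /\ A n.

Fixpoint enum (r : nat) : nat :=
  match r with
  | 0 => least_from A 0
  | S r => least_from A (S (enum r))
  end.

Definition enum_index (c : nat) : nat := epsilon (inhabits 0) (fun r => enum r = c).

Lemma enum_least r :
  least (fun n => match r with 0 => 0 | S r' => S (enum r') end <= n /\ A n) (enum r).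
Proof. destruct r; apply least_from_spec, A_unbounded. Qed.

Lemma enum_in r : A (enum r).
Proof. apply (enum_least r). Qed.

Lemma enum_lt_S r : enum r < enum (S r).
Proof. exact (proj1 (proj1 (enum_least (S r)))). Qed.

Lemma enum_lt r r' : r < r' -> enum r < enum r'.
Proof.
  induction 1 as [|r' _ IH]; [apply enum_lt_S|].
  pose proof (enum_lt_S r'). lia.
Qed.

Lemma le_enum r : r <= enum r.
Proof.
  induction r as [|r IH]; [lia|]. pose proof (enum_lt_S r). lia.
Qed.

Lemma enum_inj r r' : enum r = enum r' -> r = r'.
Proof.
  intros E. destruct (Nat.lt_trichotomy r r') as [H|[H|H]]; auto;
    apply enum_lt in H; lia.
Qed.

Lemma enum_surj c : A c -> exists r, enum r = c.
Proof.
  intros Hc. destruct (least_exists (fun r => c <= enum r)) as [r [Hr Hmin]].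
  { exists c. apply le_enum. }
  exists r. apply Nat.le_antisymm; [|easy]. apply (enum_least r). split; [|easy].
  destruct r as [|r]; [lia|].
  enough (~ c <= enum r) by lia. intros H. specialize (Hmin r H). lia.
Qed.

Lemma enum_index_enum r : enum_index (enum r) = r.
Proof. apply enum_inj, (epsilon_spec (inhabits 0) (fun r' => enum r' = enum r)). eauto. Qed.

Lemma enum_enum_index c : A c -> enum (enum_index c) = c.
Proof. intros Hc. apply (epsilon_spec (inhabits 0) (fun r => enum r = c)), enum_surj, Hc. Qed.

End Enumeration.

(** * The address automaton *)

Lemma subset_std_leaf_app w l V :
  subset (std_leaf w) V -> subset (std_leaf (w ++ l)) V.
Proof. intros H p Hp. now apply H, std_leaf_app with l. Qed.

Definition good_child (V : pset) (u : list nat) (c : nat) : Prop :=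
  subset (std_leaf (u ++ [c])) V.

Definition entry (V : pset) (p : point) (n : nat) : Prop := good_child V (init p n) (p n).

Lemma entry_at_stem V w p :
  std_leaf w p -> entry V p (length w) <-> good_child V w (p (length w)).
Proof. intros H. apply std_leaf_init in H. unfold entry. now rewrite H. Qed.

Lemma entry_ext V p q n : (forall i, i <= n -> q i = p i) -> entry V q n <-> entry V p n.
Proof.
  intros H. unfold entry. rewrite (init_ext p q) by (intros; apply H; lia).
  now rewrite H.
Qed.

Lemma entry_eventually V p b : baire_open V -> V p -> exists n, b <= n /\ entry V p n.
Proof.
  intros HV Hp. destruct (HV p Hp) as [N HN]. exists (Nat.max N b). split; [lia|].
  unfold entry, good_child. rewrite <- init_S. intros q Hq. apply HN.
  intros i Hi. rewrite Hq by (rewrite length_init; lia). apply nth_init. lia.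
Qed.

Arguments to_nat : simpl never.
Arguments of_nat : simpl never.

Inductive phase : Type := Guess | Wait (d : nat) | Pair (a : nat).

Record state : Type := mkstate { stem : list nat; level : nat; phase_of : phase }.

Section Construction.
Variable U : nat -> pset.
Hypothesis U_open : forall k, baire_open (U k).
Hypothesis U_pi_dense : forall k, pi_dense (U k).

Let Y : pset := fun p => forall k, U k p.

(* From a [Guess] state the digit is d = (n - |stem|) + a, where n is the
   first coordinate at which p enters U_k and a is the first component of
   p (S n); recording a, which a [Pair] state later checks, is what makes every
   son of a [Guess] node nonempty.  At the deadline [Wait 0] the next coordinate
   must be a good child, and it is emitted through the enumeration of those. *)
Definition step (s : state) (r : nat) : state :=
  let 'mkstate w k ph := s in
  match ph with
  | Guess => mkstate w k (Wait r)
  | Wait 0 => mkstate (w ++ [enum (good_child (U k) w) r]) k (Pair 0)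
  | Wait (S d) =>
      mkstate (w ++ [r]) k
        (if excluded_middle_informative (good_child (U k) w r) then Pair (S d) else Wait d)
  | Pair a => mkstate (w ++ [to_nat (a, r)]) (S k) Guess
  end.

Definition digit (s : state) (p : point) : nat :=
  let 'mkstate w k ph := s in
  match ph with
  | Guess =>
      let n := least_from (entry (U k) p) (length w) in
      n - length w + fst (of_nat (p (S n)))
  | Wait 0 => enum_index (good_child (U k) w) (p (length w))
  | Wait (S _) => p (length w)
  | Pair _ => snd (of_nat (p (length w)))
  end.

Definition tracks (s : state) (p : point) : Prop :=
  let 'mkstate w k ph := s in
  std_leaf w p /\
  match ph with
  | Guess => True
  | Wait d =>
      exists n, least (fun m => length w <= m /\ entry (U k) p m) n /\
                n - length w + fst (of_nat (p (S n))) = d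
  | Pair a => fst (of_nat (p (length w))) = a
  end.

Definition sound (s : state) : Prop :=
  (forall k, k < level s -> subset (std_leaf (stem s)) (U k)) /\
  (forall a, phase_of s = Pair a -> subset (std_leaf (stem s)) (U (level s))).

Lemma sound_step s r : sound s -> sound (step s r).
Proof.
  destruct s as [w k [|[|d]|a]]; unfold sound; simpl; intros [Hlow Hpair].
  - split; [easy|discriminate].
  - split; [auto using subset_std_leaf_app|].
    intros _ _. apply (enum_in _ (U_pi_dense k w)).
  - destruct excluded_middle_informative; simpl;
      (split; [auto using subset_std_leaf_app|]); [easy|discriminate].
  - split; [|discriminate]. intros k' Hk'. apply subset_std_leaf_app.
    destruct (Nat.eq_dec k' k) as [->|]; [now apply (Hpair a)|]. apply Hlow. lia.
Qed.

Lemma tracks_step s p : U (level s) p -> tracks s p -> tracks (step s (digit s p)) p.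
Proof.
  destruct s as [w k [|[|d]|a]]; simpl; intros Hp [Hw Hph].
  - split; [easy|]. eexists. split; [|reflexivity].
    apply least_from_spec, entry_eventually; auto.
  - destruct Hph as [n [[[Hn Hentry] _] Hd]].
    replace n with (length w) in * by lia. apply entry_at_stem in Hentry; [|easy].
    rewrite (enum_enum_index _ (U_pi_dense k w)) by easy.
    rewrite std_leaf_snoc, last_length. split; [easy|lia].
  - destruct Hph as [n [[[Hn Hentry] Hmin] Hd]].
    destruct excluded_middle_informative as [Hgood|Hbad];
      rewrite std_leaf_snoc, last_length; (split; [easy|]).
    + assert (n <= length w) by (apply Hmin; rewrite entry_at_stem; auto).
      replace n with (length w) in * by lia. lia.
    + assert (n <> length w) by (intros ->; now apply Hbad, entry_at_stem).
      exists n. repeat split; [lia|easy| |lia].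
      intros m [Hm Hm']. apply Hmin. split; [lia|easy].
  - rewrite std_leaf_snoc. split; [split; [easy|]|easy].
    rewrite <- Hph, <- surjective_pairing. symmetry. apply cancel_to_of.
Qed.

Lemma tracks_step_inv s r p : tracks (step s r) p -> tracks s p /\ digit s p = r.
Proof.
  destruct s as [w k [|[|d]|a]]; simpl.
  - intros [Hw [n [Hleast Hd]]]. split; [easy|].
    now rewrite (least_from_eq _ _ _ Hleast).
  - rewrite std_leaf_snoc, last_length. intros [[Hw Hc] Ha].
    assert (Hgood : good_child (U k) w (p (length w))).
    { rewrite Hc. apply (enum_in _ (U_pi_dense k w)). }
    split; [split; [easy|]|].
    + exists (length w). split; [|lia].
      split; [split; [lia|]; now apply entry_at_stem|]. now intros m [].
    + rewrite Hc. apply enum_index_enum, U_pi_dense.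
  - destruct excluded_middle_informative as [Hgood|Hbad]; simpl;
      rewrite std_leaf_snoc, last_length; intros [[Hw Hc] Hx]; subst r;
      (split; [split; [easy|]|easy]).
    + exists (length w). split; [|lia].
      split; [split; [lia|]; now apply entry_at_stem|]. now intros m [].
    + destruct Hx as [n [[[Hn Hentry] Hmin] Hd]]. exists n. split; [|lia].
      split; [split; [lia|easy]|]. intros m [Hm Hentry'].
      assert (m <> length w) by (intros ->; now apply Hbad, entry_at_stem).
      apply Hmin. split; [lia|easy].
  - rewrite std_leaf_snoc. intros [[Hw Hc] _]. rewrite Hc, cancel_of_to.
    split; easy.
Qed.

Definition start : state := mkstate [] 0 Guess.

Definition run (x : list nat) : state := fold_left step x start.

Lemma run_snoc x r : run (x ++ [r]) = step (run x) r.
Proof. unfold run. now rewrite fold_left_app. Qed.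

Lemma sound_run x : sound (run x).
Proof.
  induction x as [|r x IH] using rev_ind.
  - split; simpl; [lia|discriminate].
  - rewrite run_snoc. now apply sound_step.
Qed.

Fixpoint state_at (p : point) (n : nat) : state :=
  match n with
  | 0 => start
  | S n => step (state_at p n) (digit (state_at p n) p)
  end.

Definition address (p : point) (n : nat) : nat := digit (state_at p n) p.

Lemma run_init_address p n : run (init (address p) n) = state_at p n.
Proof. induction n as [|n IH]; [easy|]. now rewrite init_S, run_snoc, IH. Qed.

Lemma tracks_state_at p n : Y p -> tracks (state_at p n) p.
Proof.
  intros Hp. induction n as [|n IH]; [now split|]. now apply tracks_step.
Qed.

Definition cell (x : list nat) (p : point) : Prop := Y p /\ std_leaf x (address p).

Lemma run_std_leaf_address x p : std_leaf x (address p) -> run x = state_at p (length x).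
Proof.
  intros Hx. apply std_leaf_init in Hx. rewrite <- Hx at 1. apply run_init_address.
Qed.

Lemma cell_snoc x r p : cell (x ++ [r]) p <-> cell x p /\ digit (run x) p = r.
Proof.
  unfold cell. rewrite std_leaf_snoc.
  split.
  - intros [Hp [Hx Hr]]. now rewrite (run_std_leaf_address x p Hx).
  - intros [[Hp Hx] Hr]. now rewrite (run_std_leaf_address x p Hx) in Hr.
Qed.

Lemma tracks_run_cell x p : cell x p -> tracks (run x) p.
Proof.
  intros [Hp Hx]. rewrite (run_std_leaf_address x p Hx). now apply tracks_state_at.
Qed.

Lemma digit_continuous s p :
  U (level s) p -> exists M, forall q, (forall i, i < M -> q i = p i) -> digit s q = digit s p.
Proof.
  destruct s as [w k [|[|d]|a]]; simpl; intros Hp.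
  - set (n := least_from (entry (U k) p) (length w)).
    assert (Hn : least (fun m => length w <= m /\ entry (U k) p m) n)
      by (apply least_from_spec, entry_eventually; auto).
    exists (S (S n)). intros q Hq.
    enough (least_from (entry (U k) q) (length w) = n) as -> by (rewrite Hq by lia; easy).
    apply least_from_eq. destruct Hn as [[Hn Hentry] Hmin].
    split; [split; [easy|]|].
    + apply (entry_ext _ p); [intros; apply Hq; lia|easy].
    + intros m [Hm Hentry']. destruct (Nat.le_gt_cases n m); [easy|].
      apply Hmin. split; [easy|]. apply (entry_ext _ q); [intros; symmetry; apply Hq; lia|easy].
  - exists (S (length w)). intros q Hq. now rewrite Hq by lia.
  - exists (S (length w)). intros q Hq. now rewrite Hq by lia.
  - exists (S (length w)). intros q Hq. now rewrite Hq by lia.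
Qed.

Lemma address_continuous p n :
  Y p -> exists N, forall q, (forall i, i < N -> q i = p i) ->
    forall i, i < n -> address q i = address p i.
Proof.
  intros Hp. induction n as [|n [N HN]]; [exists 0; intros; lia|].
  destruct (digit_continuous (state_at p n) p (Hp _)) as [M HM].
  exists (Nat.max N M). intros q Hq i Hi.
  assert (Hprev : forall i, i < n -> address q i = address p i)
    by (apply HN; intros; apply Hq; lia).
  destruct (Nat.eq_dec i n) as [->|]; [|apply Hprev; lia].
  unfold address at 1. rewrite <- run_init_address, (init_ext (address p)) by easy.
  rewrite run_init_address. apply HM. intros; apply Hq; lia.
Qed.

Lemma cell_open x : open_in Y (cell x).
Proof.
  exists (fun q => exists p N, cell x p /\ (forall i, i < N -> q i = p i) /\
    forall q', (forall i, i < N -> q' i = p i) -> std_leaf x (address q')).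
  split.
  - intros q [p [N [Hp [Hq Hnear]]]]. exists N. intros q' Hq'.
    exists p, N. split; [easy|]. split; [|easy]. intros i Hi. rewrite Hq'; auto.
  - intros q. split.
    + intros [Hq Hx]. split; [|easy].
      destruct (address_continuous q (length x) Hq) as [N HN].
      exists q, N. repeat split; auto. intros q' Hq' i Hi. rewrite HN; auto.
    + intros [[p [N [_ [Hq Hnear]]]] HY]. split; auto.
Qed.

Definition child (s : state) (r : nat) : nat := last (stem (step s r)) 0.

Lemma step_Guess s r : phase_of s = Guess -> step s r = mkstate (stem s) (level s) (Wait r).
Proof. destruct s as [w k ph]. simpl. now intros ->. Qed.

Lemma stem_step s r :
  phase_of s <> Guess -> stem (step s r) = stem s ++ [child s r] /\ r <= child s r.
Proof.
  unfold child. destruct s as [w k [|[|d]|a]]; simpl; intros H; [easy| | |].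
  - rewrite last_last. split; [easy|]. apply le_enum, U_pi_dense.
  - now rewrite last_last.
  - rewrite last_last. split; [easy|]. unfold to_nat. lia.
Qed.

Lemma stem_step_prefix s r : prefix (stem s) (stem (step s r)).
Proof.
  destruct (phase_of s) eqn:Hph; [rewrite step_Guess by easy; apply prefix_refl|..];
    rewrite (proj1 (stem_step s r ltac:(congruence))); eexists; reflexivity.
Qed.

Lemma length_stem_step s r : length (stem (step s r)) <= S (length (stem s)).
Proof.
  destruct (phase_of s) eqn:Hph; [rewrite step_Guess by easy; simpl; lia|..];
    rewrite (proj1 (stem_step s r ltac:(congruence))), last_length; lia.
Qed.

Lemma length_stem_step_step s r r' :
  S (length (stem s)) <= length (stem (step (step s r) r')).
Proof.
  destruct (phase_of s) eqn:Hph.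
  1: rewrite (step_Guess s r Hph),
       (proj1 (stem_step (mkstate _ _ (Wait r)) r' ltac:(discriminate))), last_length;
     simpl; lia.
  all: pose proof (proj1 (prefix_iff _ _) (stem_step_prefix (step s r) r')) as [Hle _].
  all: rewrite (proj1 (stem_step s r ltac:(congruence))), last_length in Hle; lia.
Qed.

Lemma run_init_S f n : run (init f (S n)) = step (run (init f n)) (f n).
Proof. now rewrite init_S, run_snoc. Qed.

Lemma stem_run_prefix f m n : m <= n -> prefix (stem (run (init f m))) (stem (run (init f n))).
Proof.
  induction 1 as [|n _ IH]; [apply prefix_refl|].
  rewrite run_init_S. eapply prefix_trans; [apply IH|apply stem_step_prefix].
Qed.

Lemma length_stem_run f n : n <= length (stem (run (init f (2 * n)))).
Proof.
  induction n as [|n IH]; [lia|]. replace (2 * S n) with (S (S (2 * n))) by lia.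
  rewrite !run_init_S. pose proof (length_stem_step_step (run (init f (2 * n))) (f (2 * n))
    (f (S (2 * n)))). lia.
Qed.

Definition limit (f : nat -> nat) : point := fun i => nth i (stem (run (init f (2 * S i)))) 0.

Lemma std_leaf_limit f n : std_leaf (stem (run (init f n))) (limit f).
Proof.
  intros i Hi. unfold limit. set (m := Nat.max n (2 * S i)).
  destruct (proj1 (prefix_iff _ _) (stem_run_prefix f n m ltac:(lia))) as [Hn Hagn].
  destruct (proj1 (prefix_iff _ _) (stem_run_prefix f (2 * S i) m ltac:(lia))) as [_ Hagi].
  pose proof (length_stem_run f (S i)).
  rewrite Hagi, <- Hagn by lia. reflexivity.
Qed.

Lemma step_Pair s r a : phase_of s = Pair a ->
  phase_of (step s r) = Guess /\ level (step s r) = S (level s).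
Proof. destruct s as [w k ph]. simpl. now intros ->. Qed.

Lemma step_Wait s r d : phase_of s = Wait d -> level (step s r) = level s /\
  ((exists a, phase_of (step s r) = Pair a) \/
   exists d', d = S d' /\ phase_of (step s r) = Wait d').
Proof.
  destruct s as [w k ph]. simpl. intros ->. destruct d as [|d]; simpl; [eauto|].
  destruct excluded_middle_informative; eauto.
Qed.

Lemma wait_reaches_guess f d n : phase_of (run (init f n)) = Wait d ->
  exists m, n < m /\ phase_of (run (init f m)) = Guess /\
            level (run (init f n)) < level (run (init f m)).
Proof.
  revert n. induction d as [d IH] using lt_wf_ind. intros n Hn.
  destruct (step_Wait _ (f n) d Hn) as [Hlevel [[a Ha]|[d' [-> Hd']]]];
    rewrite <- run_init_S in *.
  - destruct (step_Pair _ (f (S n)) a Ha) as [Hg Hl]. rewrite <- run_init_S in *.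
    exists (S (S n)). repeat split; [lia|easy|lia].
  - destruct (IH d' ltac:(lia) (S n) Hd') as [m [Hm [Hg Hl]]].
    exists m. repeat split; [lia|easy|lia].
Qed.

Lemma eventually_guess f n :
  exists m, n < m /\ phase_of (run (init f m)) = Guess /\
            level (run (init f n)) < level (run (init f m)).
Proof.
  destruct (phase_of (run (init f n))) as [|d|a] eqn:Hph.
  - assert (Hnext := run_init_S f n). rewrite (step_Guess _ _ Hph) in Hnext.
    destruct (wait_reaches_guess f (f n) (S n)) as [m [Hm [Hg Hl]]]; [now rewrite Hnext|].
    rewrite Hnext in Hl. exists m. repeat split; [lia|easy|easy].
  - apply (wait_reaches_guess f d n Hph).
  - destruct (step_Pair _ (f n) a Hph) as [Hg Hl]. rewrite <- run_init_S in *.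
    exists (S n). repeat split; [lia|easy|lia].
Qed.

Lemma limit_in_Y f : Y (limit f).
Proof.
  intros k. assert (Hlevel : exists m, k < level (run (init f m))).
  { induction k as [|k [m Hm]].
    - destruct (eventually_guess f 0) as [m [_ [_ Hm]]]. exists m. lia.
    - destruct (eventually_guess f m) as [m' [_ [_ Hm']]]. exists m'. lia. }
  destruct Hlevel as [m Hm]. apply (proj1 (sound_run (init f m)) k Hm), std_leaf_limit.
Qed.

Lemma tracks_std_leaf s p : tracks s p -> std_leaf (stem s) p.
Proof. destruct s. simpl. tauto. Qed.

Lemma tracks_Guess s p : phase_of s = Guess -> std_leaf (stem s) p -> tracks s p.
Proof. destruct s. simpl. now intros ->. Qed.

Lemma tracks_run_init_le f p m n :
  m <= n -> tracks (run (init f n)) p -> tracks (run (init f m)) p.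
Proof.
  induction 1 as [|n _ IH]; [easy|]. rewrite run_init_S. intros H.
  apply IH, (tracks_step_inv _ _ _ H).
Qed.

Lemma tracks_limit f n : tracks (run (init f n)) (limit f).
Proof.
  destruct (eventually_guess f n) as [m [Hnm [Hg _]]].
  apply (tracks_run_init_le f _ n m); [lia|].
  apply tracks_Guess, std_leaf_limit; easy.
Qed.

Lemma digit_limit f n : digit (run (init f n)) (limit f) = f n.
Proof.
  pose proof (tracks_limit f (S n)) as H. rewrite run_init_S in H.
  apply (tracks_step_inv _ _ _ H).
Qed.

Lemma address_limit f n : address (limit f) n = f n.
Proof.
  enough (Hstate : forall n, state_at (limit f) n = run (init f n))
    by (unfold address; now rewrite Hstate, digit_limit).
  intros m. induction m as [|m IH]; [easy|].
  simpl. now rewrite IH, digit_limit, run_init_S.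
Qed.

Lemma limit_unique f p : Y p -> (forall n, address p n = f n) -> p = limit f.
Proof.
  intros Hp Haddr. apply functional_extensionality. intros i. unfold limit.
  rewrite (init_ext (address p) f) by auto. rewrite run_init_address.
  apply (tracks_std_leaf _ _ (tracks_state_at p _ Hp)).
  rewrite <- run_init_address, (init_ext f (address p)) by auto.
  pose proof (length_stem_run f (S i)). lia.
Qed.

Lemma cells_along_path f q : (forall n, cell (init f n) q) <-> q = limit f.
Proof.
  split.
  - intros H. apply limit_unique; [apply (H 0)|]. intros i.
    destruct (H (S i)) as [_ Hi]. rewrite (Hi i) by (rewrite length_init; lia).
    rewrite nth_init; auto.
  - intros -> n. split; [apply limit_in_Y|]. intros i Hi. rewrite length_init in Hi.
    rewrite nth_init, address_limit; auto.
Qed.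

Lemma cell_nil p : cell [] p <-> Y p.
Proof. split; [now intros []|]. split; [easy|]. now intros i. Qed.

Lemma cell_nonempty x : nonempty (cell x).
Proof.
  exists (limit (fun i => nth i x 0)).
  rewrite <- init_nth at 1. now apply cells_along_path.
Qed.

Lemma entering_state p y : Y p -> std_leaf y p ->
  exists n, phase_of (state_at p n) <> Guess /\ stem (state_at p n) = y.
Proof.
  intros Hp Hy.
  destruct (discrete_ivt (fun n => length (stem (state_at p n))) (length y) (2 * S (length y)))
    as [n [Hn HSn]].
  - simpl. lia.
  - rewrite <- run_init_address. pose proof (length_stem_run (address p) (S (length y))). lia.
  - intros n. apply length_stem_step.
  - assert (Hph : phase_of (state_at p n) <> Guess).
    { intros Hg. simpl in HSn. rewrite (step_Guess _ _ Hg) in HSn. simpl in HSn. lia. }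
    exists n. split; [easy|].
    apply (std_leaf_unique _ _ p); auto using tracks_std_leaf, tracks_state_at.
Qed.

Lemma locally_strict_cells : locally_strict (prefix_tree cell).
Proof.
  apply locally_strict_prefix_tree.
  - intros x p. split.
    + intros Hx. exists (digit (run x) p). now apply cell_snoc.
    + intros [r Hr]. now apply cell_snoc in Hr.
  - intros x r r' p Hr Hr'. apply cell_snoc in Hr as [_ <-], Hr' as [_ <-]. easy.
Qed.

Lemma strict_branches_cells : strict_branches (prefix_tree cell).
Proof.
  split; [exact (inhabits [])|]. intros B HB.
  destruct (branch_prefix_tree _ _ HB) as [f Hf]. exists (limit f). intros q.
  rewrite <- cells_along_path. unfold fruit. simpl. split.
  - intros H n. apply H, Hf. now rewrite length_init.
  - intros H x Hx. apply Hf in Hx. rewrite Hx. apply H.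
Qed.

Lemma shoots_into_standard : shoots_into (prefix_tree cell) standard_tree.
Proof.
  intros p [x0 [Hp _]] y Hy. destruct (entering_state p y Hp Hy) as [n [Hph Hstem]].
  set (s := state_at p n) in *. exists (init (address p) n). split.
  { split; [easy|]. apply std_leaf_init. now rewrite length_init. }
  apply (refines_shoot_prefix_tree cell std_leaf _ y (child s)).
  - intros r. apply (stem_step s r Hph).
  - intros r. apply cell_nonempty.
  - intros r q Hq. apply tracks_run_cell in Hq.
    rewrite run_snoc, run_init_address in Hq. fold s in Hq.
    rewrite <- Hstem, <- (proj1 (stem_step s r Hph)). now apply tracks_std_leaf.
Qed.

End Construction.

Theorem mainTheorem4 (U : nat -> pset)
  (hU : forall n, baire_open (U n) /\ pi_dense (U n)) :
  exists H : foliage_tree,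
    baire_foliage_tree (fun p => forall n, U n p) H /\ shoots_into H standard_tree.
Proof.
  assert (U_open : forall n, baire_open (U n)) by apply hU.
  assert (U_pi_dense : forall n, pi_dense (U n)) by apply hU.
  exists (prefix_tree (cell U)). split; [|now apply shoots_into_standard].
  split; [|split; [|split; [|split]]].
  - exists (fun x => x). repeat split; eauto.
  - intros x. now apply cell_open.
  - now apply locally_strict_cells.
  - now apply strict_branches_cells.
  - exists []. split.
    + intros [|a x]; [now left|right]. now exists (a :: x).
    + intros p. apply cell_nil.
Qed.
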